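(* Let $P$ be a $C_\pi$ process and suppose $P\xrightarrow{\alpha_1}P_1\xrightarrow{\alpha_2}\cdots\xrightarrow{\alpha_m}P_m$. Then $\mathrm{fo}(P_m)\subseteq \mathrm{fo}(P)\cup\mathrm{bn}(\alpha_1)\cup\cdots\cup\mathrm{bn}(\alpha_m)$.
   Context: The Confidential $\pi$-calculus $C_\pi$. There are two disjoint countable sets: ${\cal V}$ of variables (ranged over by $x,y,z,\dots$) and ${\cal C}$ of channels (ranged over by $k,l,m,n,\dots$). Let ${\cal N}={\cal V}\cup{\cal C}$, ranged over by $a,b,c,\dots$. Prefixes: $\pi ::= \overline{a}\langle k\rangle \mid a(x) \mid [a=b]\pi$. Processes: $P ::= 0 \mid \pi.P \mid P\,|\,P \mid (\nu k)P \mid\, !P$. The object of an output is always a channel, and the bound object of an input is always a variable. In $(\nu k)P$ the channel $k$ is bound, and in $a(x).P$ the variable $x$ is bound, with scope $P$. The sets $\mathrm{fn}(P)$, $\mathrm{bn}(P)$ and $\mathrm{n}(P)$ are the free, bound and all names of $P$. The set $\mathrm{fo}(P)$ consists of the free channels of $P$ that occur as objects of output prefixes in $P$. Processes are identified up to $\alpha$-conversion. Actions: $\alpha ::= \overline{k}\langle l\rangle \mid k(l) \mid (\nu l)\overline{k}\langle l\rangle \mid \tau$, where $k,l$ are channels. We have $\mathrm{fn}(\overline{k}\langle l\rangle)=\mathrm{fn}(k(l))=\{k,l\}$, $\mathrm{fn}((\nu l)\overline{k}\langle l\rangle)=\{k\}$, $\mathrm{bn}((\nu l)\overline{k}\langle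 l\rangle)=\{l\}$, all other bound-name sets are empty, $\mathrm{fn}(\tau)=\emptyset$, and $\mathrm{n}(\alpha)=\mathrm{fn}(\alpha)\cup\mathrm{bn}(\alpha)$. The labelled transition relation $\xrightarrow{\alpha}$ is the least relation closed under the following rules: - (out) $\overline{k}\langle l\rangle.P \xrightarrow{\overline{k}\langle l\rangle} P$. - (in) $k(x).P \xrightarrow{k(l)} P\{l/x\}$ for every channel $l$. - (match) If $\pi.P\xrightarrow{\alpha}P'$, then $[a=a]\pi.P\xrightarrow{\alpha}P'$. - (res) If $P\xrightarrow{\alpha}P'$ and $k\notin \mathrm{n}(\alpha)$, then $(\nu k)P\xrightarrow{\alpha}(\nu k)P'$. - (open) If $P\xrightarrow{\overline{k}\langle l\rangle}Q$ and $k\neq l$, then $(\nu l)P\xrightarrow{(\nu l)\overline{k}\langle l\rangle}Q$. - (par-l) If $P\xrightarrow{\alpha}Q$ and $\mathrm{bn}(\alpha)\cap\mathrm{fn}(R)=\emptyset$, then $P|R\xrightarrow{\alpha}Q|R$. - (comm-l) If $P\xrightarrow{\overline{k}\langle l\rangle}P'$ and $Q\xrightarrow{k(l)}Q'$, then $P|Q\xrightarrow{\tau}P'|Q'$. - (close-l) If $P\xrightarrow{(\nu l)\overline{k}\langle l\rangle}P'$, $Q\xrightarrow{k(l)}Q'$ and $l\notin\mathrm{fn}(Q)$, then $P|Q\xrightarrow{\tau}(\nu l)(P'|Q')$. - The symmetric rules (par-r), (comm-r), (close-r). - (rep-act) If $P\xrightarrow{\alpha}P'$, then $!P\xrightarrow{\alpha}P'|!P$.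 - (rep-comm) If $P\xrightarrow{\overline{k}\langle l\rangle}P'$ and $P\xrightarrow{k(l)}P''$, then $!P\xrightarrow{\tau}(P'|P'')|!P$. - (rep-close) If $P\xrightarrow{(\nu l)\overline{k}\langle l\rangle}P'$, $P\xrightarrow{k(l)}P''$ and $l\notin\mathrm{fn}(P)$, then $!P\xrightarrow{\tau}(\nu l)(P'|P'')|!P$. *)

From Stdlib Require Import List Arith.
Import ListNotations.

(* Two disjoint countable sets: variables and channels (both indexed by nat,
   kept disjoint by the constructors of [name]). *)
Definition var := nat.
Definition chan := nat.

Inductive name : Type :=
| NVar (x : var)
| NChan (k : chan).

(* pi ::= a<k> | a(x) | [a=b]pi  (output object is a channel, input binds a variable) *)
Inductive prefix : Type :=
| POut (a : name) (k : chan)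
| PIn (a : name) (x : var)
| PMatch (a b : name) (p : prefix).

Inductive proc : Type :=
| Nil
| Pre (p : prefix) (P : proc)
| Par (P Q : proc)
| Res (k : chan) (P : proc)
| Rep (P : proc).

Fixpoint pbv (p : prefix) : option var :=
  match p with
  | POut _ _ => None
  | PIn _ x => Some x
  | PMatch _ _ q => pbv q
  end.

(* ---------- alpha-equivalence, via translation to nameless (de Bruijn) form ---------- *)
Inductive dname : Type :=
| DFV (x : var) | DBV (i : nat) | DFC (k : chan) | DBC (i : nat).

Inductive dprefix : Type :=
| DOut (a c : dname)
| DIn (a : dname)
| DMatch (a b : dname) (p : dprefix).

Inductive dproc : Type :=
| DNil
| DPre (p : dprefix) (P : dproc)
| DPar (P Q : dproc)
| DRes (P : dproc)
| DRep (P : dproc).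

Fixpoint lookup (l : list nat) (x : nat) : option nat :=
  match l with
  | [] => None
  | y :: l' => if Nat.eqb x y then Some 0 else option_map S (lookup l' x)
  end.

Definition db_name (cenv venv : list nat) (a : name) : dname :=
  match a with
  | NVar x => match lookup venv x with Some i => DBV i | None => DFV x end
  | NChan k => match lookup cenv k with Some i => DBC i | None => DFC k end
  end.

Fixpoint db_prefix (cenv venv : list nat) (p : prefix) : dprefix :=
  match p with
  | POut a k => DOut (db_name cenv venv a) (db_name cenv venv (NChan k))
  | PIn a _ => DIn (db_name cenv venv a)
  | PMatch a b q => DMatch (db_name cenv venv a) (db_name cenv venv b) (db_prefix cenv venv q)
  end.

Fixpoint db (cenv venv : list nat) (P : proc) : dproc :=
  match P with
  | Nil => DNil
  | Pre p Q => DPre (db_prefix cenv venv p)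
                    (db cenv (match pbv p with Some x => x :: venv | None => venv end) Q)
  | Par Q R => DPar (db cenv venv Q) (db cenv venv R)
  | Res k Q => DRes (db (k :: cenv) venv Q)
  | Rep Q => DRep (db cenv venv Q)
  end.

Definition alpha (P Q : proc) : Prop := db [] [] P = db [] [] Q.

Definition name_chans (a : name) : list chan :=
  match a with NVar _ => [] | NChan k => [k] end.

Fixpoint prefix_chans (p : prefix) : list chan :=
  match p with
  | POut a k => name_chans a ++ [k]
  | PIn a _ => name_chans a
  | PMatch a b q => name_chans a ++ name_chans b ++ prefix_chans q
  end.

(* free channels of a process (the channel part of fn(P)) *)
Fixpoint fc (P : proc) : list chan :=
  match P with
  | Nil => []
  | Pre p Q => prefix_chans p ++ fc Q
  | Par Q R => fc Q ++ fc R
  | Res k Q => remove Nat.eq_dec k (fc Q)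
  | Rep Q => fc Q
  end.

Fixpoint bc (P : proc) : list chan :=
  match P with
  | Nil => []
  | Pre _ Q => bc Q
  | Par Q R => bc Q ++ bc R
  | Res k Q => k :: bc Q
  | Rep Q => bc Q
  end.

Fixpoint prefix_objs (p : prefix) : list chan :=
  match p with
  | POut _ k => [k]
  | PIn _ _ => []
  | PMatch _ _ q => prefix_objs q
  end.

Fixpoint fo (P : proc) : list chan :=
  match P with
  | Nil => []
  | Pre p Q => prefix_objs p ++ fo Q
  | Par Q R => fo Q ++ fo R
  | Res k Q => remove Nat.eq_dec k (fo Q)
  | Rep Q => fo Q
  end.

Definition subst_name (x : var) (l : chan) (a : name) : name :=
  match a with
  | NVar y => if Nat.eqb x y then NChan l else a
  | NChan _ => a
  end.

Fixpoint subst_prefix (x : var) (l : chan) (p : prefix) : prefix :=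
  match p with
  | POut a k => POut (subst_name x l a) k
  | PIn a y => PIn (subst_name x l a) y
  | PMatch a b q => PMatch (subst_name x l a) (subst_name x l b) (subst_prefix x l q)
  end.

(* naive substitution; it is used only when l is not bound in P (so no capture),
   which together with the alpha rule gives capture-avoiding substitution *)
Fixpoint subst (x : var) (l : chan) (P : proc) : proc :=
  match P with
  | Nil => Nil
  | Pre p Q => Pre (subst_prefix x l p)
                   (match pbv p with
                    | Some y => if Nat.eqb x y then Q else subst x l Q
                    | None => subst x l Q end)
  | Par Q R => Par (subst x l Q) (subst x l R)
  | Res k Q => Res k (subst x l Q)
  | Rep Q => Rep (subst x l Q)
  end.

Inductive act : Type :=
| AOut (k l : chan)
| AIn (k l : chan)
| ABOut (k l : chan)
| ATau.

Definition fn_act (a : act) : list chan :=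
  match a with
  | AOut k l => [k; l] | AIn k l => [k; l] | ABOut k _ => [k] | ATau => []
  end.

Definition bn_act (a : act) : list chan :=
  match a with ABOut _ l => [l] | _ => [] end.

Definition n_act (a : act) : list chan := fn_act a ++ bn_act a.

Definition disjoint (l1 l2 : list chan) : Prop := forall c, In c l1 -> ~ In c l2.

Inductive trans : proc -> act -> proc -> Prop :=
| t_out k l P : trans (Pre (POut (NChan k) l) P) (AOut k l) P
| t_in k x l P : ~ In l (bc P) -> trans (Pre (PIn (NChan k) x) P) (AIn k l) (subst x l P)
| t_match a p P a' P' : trans (Pre p P) a' P' -> trans (Pre (PMatch a a p) P) a' P'
| t_res k P a P' : trans P a P' -> ~ In k (n_act a) -> trans (Res k P) a (Res k P')
| t_open l k P Q : trans P (AOut k l) Q -> k <> l -> trans (Res l P) (ABOut k l) Q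
| t_par_l P Q R a : trans P a Q -> disjoint (bn_act a) (fc R) -> trans (Par P R) a (Par Q R)
| t_par_r P Q R a : trans P a Q -> disjoint (bn_act a) (fc R) -> trans (Par R P) a (Par R Q)
| t_comm_l P P' Q Q' k l : trans P (AOut k l) P' -> trans Q (AIn k l) Q' ->
    trans (Par P Q) ATau (Par P' Q')
| t_comm_r P P' Q Q' k l : trans P (AOut k l) P' -> trans Q (AIn k l) Q' ->
    trans (Par Q P) ATau (Par Q' P')
| t_close_l P P' Q Q' k l : trans P (ABOut k l) P' -> trans Q (AIn k l) Q' -> ~ In l (fc Q) ->
    trans (Par P Q) ATau (Res l (Par P' Q'))
| t_close_r P P' Q Q' k l : trans P (ABOut k l) P' -> trans Q (AIn k l) Q' -> ~ In l (fc Q) ->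
    trans (Par Q P) ATau (Res l (Par Q' P'))
| t_rep_act P a P' : trans P a P' -> trans (Rep P) a (Par P' (Rep P))
| t_rep_comm P P' P'' k l : trans P (AOut k l) P' -> trans P (AIn k l) P'' ->
    trans (Rep P) ATau (Par (Par P' P'') (Rep P))
| t_rep_close P P' P'' k l : trans P (ABOut k l) P' -> trans P (AIn k l) P'' -> ~ In l (fc P) ->
    trans (Rep P) ATau (Par (Res l (Par P' P'')) (Rep P))
(* processes are identified up to alpha-conversion *)
| t_alpha P P1 a Q1 Q : alpha P P1 -> trans P1 a Q1 -> alpha Q1 Q -> trans P a Q.

Inductive steps : proc -> list act -> proc -> Prop :=
| steps_nil P : steps P [] P
| steps_cons P a P1 l Q : trans P a P1 -> steps P1 l Q -> steps P (a :: l) Q.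

From Stdlib Require Import List Arith.
Import ListNotations.

(* Output objects are never created by a transition, only uncovered.

   Along a single step P --a--> Q, every free output object of Q is a free
   output object of P or the channel extruded by a (the bound name of a).
   We express this as the list inclusion [fo_bounded P a Q] and prove it by
   induction on the derivation of the step: input substitutes channels only
   for variables, hence never touches output objects; restriction and
   parallel composition preserve the bound; (open) is the only rule that can
   uncover a restricted output object, and it does so exactly for the channel
   it extrudes; (close) re-binds that channel.  The alpha-conversion rule is
   handled by showing that fo is invariant under alpha-equivalence, computed
   through the nameless (de Bruijn) representation, where the output objects
   that remain free channels are exactly the free output objects.
   Chaining the single-step bound along a sequence of transitions gives the
   theorem. *)

Lemma in_remove_iff (l : list chan) (c k : chan) :
  In c (remove Nat.eq_dec k l) <-> In c l /\ c <> k.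
Proof.
  split; [apply in_remove | intros [Hc Hck]; exact (in_in_remove _ _ Hck Hc)].
Qed.

Lemma lookup_None (env : list nat) (x : nat) : lookup env x = None <-> ~ In x env.
Proof.
  induction env as [|y env IH]; simpl; [tauto|].
  destruct (Nat.eqb_spec x y) as [-> | Hxy].
  - split; [discriminate | intros H; exfalso; auto].
  - destruct (lookup env x) eqn:Hx; simpl.
    + split; [discriminate|]. intros H. exfalso.
      destruct (in_dec Nat.eq_dec x env) as [Hin | Hin];
        [apply H; now right | apply IH in Hin; congruence].
    + split; [|reflexivity]. intros _ [H | H]; [congruence | now apply IH in H].
Qed.

Fixpoint dprefix_objs (p : dprefix) : list chan :=
  match p with
  | DOut _ (DFC c) => [c]
  | DOut _ _ => []
  | DIn _ => []
  | DMatch _ _ q => dprefix_objs q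
  end.

(* The analogue of fo on nameless processes: bound channels are indices,
   so only free output objects are collected. *)
Fixpoint dfo (P : dproc) : list chan :=
  match P with
  | DNil => []
  | DPre p Q => dprefix_objs p ++ dfo Q
  | DPar Q R => dfo Q ++ dfo R
  | DRes Q => dfo Q
  | DRep Q => dfo Q
  end.

Lemma db_prefix_objs (cenv venv : list nat) (p : prefix) (c : chan) :
  In c (dprefix_objs (db_prefix cenv venv p)) <-> In c (prefix_objs p) /\ ~ In c cenv.
Proof.
  induction p as [a k | a x | a b p IH]; simpl; [|tauto|exact IH].
  destruct (lookup cenv k) eqn:Hk; simpl.
  - split; [tauto|]. intros [[<- | []] Hc].
    apply lookup_None in Hc. congruence.
  - rewrite <- lookup_None. split; [intros [<- | []] | intros [[<- | []] _]]; auto.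
Qed.

Lemma db_fo (P : proc) : forall (cenv venv : list nat) (c : chan),
  In c (dfo (db cenv venv P)) <-> In c (fo P) /\ ~ In c cenv.
Proof.
  induction P as [| p P IH | P IHP Q IHQ | k P IH | P IH];
    intros cenv venv c; simpl.
  - tauto.
  - rewrite !in_app_iff, db_prefix_objs, IH. tauto.
  - rewrite !in_app_iff, IHP, IHQ. tauto.
  - rewrite IH, in_remove_iff. simpl. intuition.
  - apply IH.
Qed.

Lemma alpha_fo (P Q : proc) : alpha P Q -> incl (fo Q) (fo P).
Proof.
  unfold alpha. intros Hpq c Hc.
  apply (db_fo P [] [] c). rewrite Hpq.
  apply (db_fo Q [] [] c). auto.
Qed.

(* Substituting a channel for a variable leaves output objects unchanged:
   objects of outputs are always channels. *)
Lemma subst_fo (x : var) (l : chan) (P : proc) : fo (subst x l P) = fo P.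
Proof.
  assert (Hobjs : forall p, prefix_objs (subst_prefix x l p) = prefix_objs p)
    by (induction p; simpl; auto).
  induction P as [| p P IH | P IHP Q IHQ | k P IH | P IH]; simpl; try congruence.
  rewrite Hobjs. f_equal.
  destruct (pbv p); [destruct (Nat.eqb x v)|]; auto.
Qed.

Definition fo_bounded (P : proc) (a : act) (Q : proc) : Prop :=
  incl (fo Q) (fo P ++ bn_act a).

Lemma fo_bounded_res (k : chan) (P P' : proc) (a : act) :
  fo_bounded P a P' -> fo_bounded (Res k P) a (Res k P').
Proof.
  unfold fo_bounded. simpl. intros H c Hc.
  apply in_remove_iff in Hc as [Hc Hck].
  specialize (H c Hc). rewrite in_app_iff, in_remove_iff in *. tauto.
Qed.

Lemma fo_bounded_open (P Q : proc) (k l : chan) :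
  fo_bounded P (AOut k l) Q -> fo_bounded (Res l P) (ABOut k l) Q.
Proof.
  unfold fo_bounded. simpl. intros H c Hc.
  specialize (H c Hc). rewrite app_nil_r in H.
  rewrite in_app_iff, in_remove_iff. simpl.
  destruct (Nat.eq_dec c l); auto.
Qed.

Lemma fo_bounded_par_l (P Q R : proc) (a : act) :
  fo_bounded P a Q -> fo_bounded (Par P R) a (Par Q R).
Proof.
  unfold fo_bounded. simpl. intros H c Hc.
  rewrite !in_app_iff in *. destruct Hc as [Hc | Hc]; auto.
  specialize (H c Hc). rewrite in_app_iff in H. tauto.
Qed.

Lemma fo_bounded_par_r (P Q R : proc) (a : act) :
  fo_bounded P a Q -> fo_bounded (Par R P) a (Par R Q).
Proof.
  unfold fo_bounded. simpl. intros H c Hc.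
  rewrite !in_app_iff in *. destruct Hc as [Hc | Hc]; auto.
  specialize (H c Hc). rewrite in_app_iff in H. tauto.
Qed.

Lemma fo_bounded_free (P Q : proc) (a : act) :
  fo_bounded P a Q -> bn_act a = [] -> incl (fo Q) (fo P).
Proof. unfold fo_bounded. intros H Ha. rewrite Ha, app_nil_r in H. exact H. Qed.

Lemma fo_bounded_comm (P P' Q Q' : proc) (a b : act) :
  fo_bounded P a P' -> fo_bounded Q b Q' -> bn_act a = [] -> bn_act b = [] ->
  fo_bounded (Par P Q) ATau (Par P' Q').
Proof.
  intros HP HQ Ha Hb. unfold fo_bounded. simpl. rewrite app_nil_r.
  apply incl_app_app; [exact (fo_bounded_free _ _ _ HP Ha)
                      | exact (fo_bounded_free _ _ _ HQ Hb)].
Qed.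

(* (close): a channel [l] that may be uncovered in the continuations is
   restricted again around them. *)
Lemma fo_bounded_rebind (l : chan) (P P' Q Q' : proc) :
  incl (fo P') (fo P ++ [l]) -> incl (fo Q') (fo Q ++ [l]) ->
  fo_bounded (Par P Q) ATau (Res l (Par P' Q')).
Proof.
  unfold fo_bounded. simpl. intros HP HQ c Hc.
  apply in_remove_iff in Hc as [Hc Hcl].
  rewrite app_nil_r, in_app_iff in *. destruct Hc as [Hc | Hc];
    [specialize (HP c Hc) | specialize (HQ c Hc)]; simpl in *;
    rewrite in_app_iff in *; simpl in *; intuition congruence.
Qed.

Lemma fo_bounded_rep_act (P P' : proc) (a : act) :
  fo_bounded P a P' -> fo_bounded (Rep P) a (Par P' (Rep P)).
Proof.
  unfold fo_bounded. simpl. intros H.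
  apply incl_app; [exact H | apply incl_appl, incl_refl].
Qed.

Lemma fo_bounded_rep_tau (P R : proc) :
  fo_bounded (Par P P) ATau R -> fo_bounded (Rep P) ATau (Par R (Rep P)).
Proof.
  unfold fo_bounded. simpl. rewrite !app_nil_r. intros H c Hc.
  apply in_app_or in Hc as [Hc | Hc]; [|exact Hc].
  apply H, in_app_or in Hc as [Hc | Hc]; exact Hc.
Qed.

Lemma fo_bounded_alpha (P P1 Q1 Q : proc) (a : act) :
  alpha P P1 -> alpha Q1 Q -> fo_bounded P1 a Q1 -> fo_bounded P a Q.
Proof.
  unfold fo_bounded. intros Hp Hq H.
  apply (incl_tran (alpha_fo _ _ Hq)), (incl_tran H).
  apply incl_app_app; [exact (alpha_fo _ _ Hp) | apply incl_refl].
Qed.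

Lemma trans_fo_bounded (P : proc) (a : act) (Q : proc) :
  trans P a Q -> fo_bounded P a Q.
Proof.
  induction 1 as
    [ k l P | k x l P _ | b p P a' P' _ IH | k P a P' _ IH _
    | l k P Q _ IH _ | P Q R a _ IH _ | P Q R a _ IH _
    | P P' Q Q' k l _ IHP _ IHQ | P P' Q Q' k l _ IHP _ IHQ
    | P P' Q Q' k l _ IHP _ IHQ _ | P P' Q Q' k l _ IHP _ IHQ _
    | P a P' _ IH | P P' P'' k l _ IHP _ IHQ
    | P P' P'' k l _ IHP _ IHQ _ | P P1 a Q1 Q Hp _ IH Hq ].
  - unfold fo_bounded. simpl. rewrite app_nil_r. apply incl_tl, incl_refl.
  - unfold fo_bounded. simpl. rewrite subst_fo. apply incl_appl, incl_refl.
  - exact IH.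
  - exact (fo_bounded_res k P P' a IH).
  - exact (fo_bounded_open P Q k l IH).
  - exact (fo_bounded_par_l P Q R a IH).
  - exact (fo_bounded_par_r P Q R a IH).
  - exact (fo_bounded_comm _ _ _ _ _ _ IHP IHQ eq_refl eq_refl).
  - exact (fo_bounded_comm _ _ _ _ _ _ IHQ IHP eq_refl eq_refl).
  - apply fo_bounded_rebind; [exact IHP | apply incl_appl, (fo_bounded_free _ _ _ IHQ eq_refl)].
  - apply fo_bounded_rebind; [apply incl_appl, (fo_bounded_free _ _ _ IHQ eq_refl) | exact IHP].
  - exact (fo_bounded_rep_act P P' a IH).
  - apply fo_bounded_rep_tau, (fo_bounded_comm _ _ _ _ _ _ IHP IHQ eq_refl eq_refl).
  - apply fo_bounded_rep_tau, fo_bounded_rebind;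
      [exact IHP | apply incl_appl, (fo_bounded_free _ _ _ IHQ eq_refl)].
  - exact (fo_bounded_alpha P P1 Q1 Q a Hp Hq IH).
Qed.

Lemma steps_fo (P Q : proc) (alphas : list act) :
  steps P alphas Q -> incl (fo Q) (fo P ++ flat_map bn_act alphas).
Proof.
  induction 1 as [P | P a P1 l Q Hstep _ IH]; simpl.
  - apply incl_appl, incl_refl.
  - apply (incl_tran IH). rewrite app_assoc.
    apply incl_app_app; [exact (trans_fo_bounded _ _ _ Hstep) | apply incl_refl].
Qed.

Theorem corollary2 (P Pm : proc) (alphas : list act) :
  steps P alphas Pm ->
  forall c : chan, In c (fo Pm) ->
    In c (fo P) \/ exists a : act, In a alphas /\ In c (bn_act a).
Proof.
  intros Hsteps c Hc.
  apply (steps_fo _ _ _ Hsteps), in_app_or in Hc as [Hc | Hc]; [now left|].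
  right. apply in_flat_map in Hc as [a [Ha Hca]]. now exists a.
Qed.
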